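(* Let $A$ be a non-zero $n\times m$ matrix with entries in $[0,1]$. Suppose the row player plays the multiplicative weight update (MWU) algorithm with a non-increasing step size sequence $(\mu_t)$ such that $\lim_{T\to\infty}\sum_{t=1}^T\mu_t=\infty$ and there exists $t'\in\mathbb{N}$ with $\mu_{t'}\le1$, and the column player plays the LRCA algorithm. Then there exists a minimax strategy $\bar x^*$ of the row player such that $\lim_{t\to\infty}RE(\bar x^*\|x_t)=0$, and hence $\lim_{t\to\infty}x_t=\bar x^*$.
   Context: Repeated two-player zero-sum game: at round $t=1,2,\dots$ the row player plays $x_t\in\Delta_n$, the column player plays $y_t\in\Delta_m$; the row player minimizes, the column player maximizes $x_t^\top Ay_t$. $v$ is the value of the game and $f(x):=\max_{y\in\Delta_m}x^\top Ay$; a minimax strategy of the row player is $x$ with $f(x)=v$, of the column player is $y$ with $\min_{x\in\Delta_n}x^\top Ay=v$. Relative entropy: $RE(X_1\|X_2)=\sum_{i}X_1(i)\log\frac{X_1(i)}{X_2(i)}$. MWU for the row player: from an initial $x_1$ with all entries positive, $x_{t+1}(i)=x_t(i)e^{-\mu_t e_i^\top Ay_t}/\sum_j x_t(j)e^{-\mu_t e_j^\top Ay_t}$, $\mu_t\ge0$. LRCA for the column player (who knows $A$ and fixes a minimax strategy $y^*$ of the column player): at odd rounds $y_t=y^*$; at even rounds $t$, $e_t\in\arg\max_{e\in\{e_1,\dots,e_m\}}x_{t-1}^\top Ae$, $\alpha_t=\frac{f(x_{t-1})-v}{\max(n/4,2)}$, $y_t=(1-\alpha_t)y^*+\alpha_te_t$.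 *)

From mathcomp Require Import all_boot all_order all_algebra.
From mathcomp Require Import all_classical all_reals all_analysis.
Set Implicit Arguments. Unset Strict Implicit. Unset Printing Implicit Defensive.
Import Order.TTheory GRing.Theory Num.Theory.
Local Open Scope classical_set_scope.
Local Open Scope ring_scope.

Section Game.
Context {R : realType}.

Definition simplex (k : nat) : set ('I_k -> R) :=
  [set x | (forall i, 0 <= x i) /\ \sum_(i < k) x i = 1].

Arguments simplex : clear implicits.

Definition payoff (n m : nat) (A : 'M[R]_(n, m)) (x : 'I_n -> R) (y : 'I_m -> R) : R :=
  \sum_(i < n) \sum_(j < m) x i * A i j * y j.

Definition fval (n m : nat) (A : 'M[R]_(n, m)) (x : 'I_n -> R) : R :=
  sup [set payoff A x y | y in simplex m].

Definition game_value (n m : nat) (A : 'M[R]_(n, m)) : R :=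
  inf [set fval A x | x in simplex n].

Definition row_minimax (n m : nat) (A : 'M[R]_(n, m)) (x : 'I_n -> R) : Prop :=
  simplex n x /\ fval A x = game_value A.

Definition col_minimax (n m : nat) (A : 'M[R]_(n, m)) (y : 'I_m -> R) : Prop :=
  simplex m y /\ inf [set payoff A x y | x in simplex n] = game_value A.

(* relative entropy RE(X1 || X2) = sum_i X1(i) log (X1(i)/X2(i))
   (terms with X1(i) = 0 vanish, since 0 * ln _ = 0) *)
Definition RE (n : nat) (X1 X2 : 'I_n -> R) : R :=
  \sum_(i < n) X1 i * ln (X1 i / X2 i).

Definition pure (m : nat) (j : 'I_m) : 'I_m -> R :=
  fun k => if k == j then 1 else 0.

Definition is_MWU (n m : nat) (A : 'M[R]_(n, m)) (mu : nat -> R)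
    (x : nat -> 'I_n -> R) (y : nat -> 'I_m -> R) : Prop :=
  simplex n (x 1%N) /\ (forall i, 0 < x 1%N i) /\
  forall t, (1 <= t)%N -> forall i,
    x t.+1 i = x t i * expR (- mu t * payoff A (pure i) (y t)) /
               \sum_(j < n) x t j * expR (- mu t * payoff A (pure j) (y t)).

Definition is_LRCA (n m : nat) (A : 'M[R]_(n, m)) (ystar : 'I_m -> R)
    (x : nat -> 'I_n -> R) (y : nat -> 'I_m -> R) : Prop :=
  forall t, (1 <= t)%N ->
    (odd t -> y t = ystar) /\
    (~~ odd t -> exists e : 'I_m,
        (forall k : 'I_m, payoff A (x t.-1) (pure k) <= payoff A (x t.-1) (pure e)) /\
        let alpha := (fval A (x t.-1) - game_value A) / Num.max (n%:R / 4) 2 in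
        y t = fun j => (1 - alpha) * ystar j + alpha * pure e j).

End Game.

(* Along odd rounds, where the column player plays the minimax strategy y*, the
   relative entropy RE (p || x_t) to any minimax strategy p of the row player does
   not increase; over a pair of rounds t (odd), t + 1 it drops by at least
   mu_(t+1) alpha_t^2, with alpha_t proportional to the exploitability f(x_t) - v.
   As sum mu_t diverges, the exploitability of the odd iterates gets arbitrarily
   small, so any cluster point xbar of those iterates is a minimax strategy.  Then
   RE (xbar || x_t) is nonincreasing from some odd round on and arbitrarily small at
   the rounds where x_t is close to xbar, hence tends to 0, and the Pinsker-type
   bound (x_t i - xbar i)^2 <= 4 RE (xbar || x_t) gives x_t --> xbar. *)

From mathcomp Require Import all_boot all_order all_algebra.
From mathcomp Require Import all_classical all_reals all_analysis.
From mathcomp Require Import ring lra zify.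
Import Order.TTheory GRing.Theory Num.Theory numFieldNormedType.Exports.
Local Open Scope classical_set_scope.
Local Open Scope ring_scope.
Set Implicit Arguments. Unset Strict Implicit. Unset Printing Implicit Defensive.

Section Simplex.
Context {R : realType}.

Lemma psumr_gt0 n (F : 'I_n -> R) : (0 < n)%N -> (forall i, 0 < F i) -> 0 < \sum_i F i.
Proof.
case: n F => // n F _ F0; rewrite big_ord_recl ltr_pwDl //.
by apply: sumr_ge0 => i _; exact/ltW.
Qed.

Lemma simplex_dim_gt0 n (z : 'I_n -> R) : simplex z -> (0 < n)%N.
Proof. by case: n z => [|n] z [_] //; rewrite big_ord0 => /esym/eqP; rewrite oner_eq0. Qed.

Lemma simplex_le1 n (z : 'I_n -> R) i : simplex z -> z i <= 1.
Proof.
by move=> [z0 <-]; rewrite (bigD1 i) //= lerDl; apply: sumr_ge0 => j _; exact: z0.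
Qed.

Lemma pure_simplex n (j : 'I_n) : simplex (pure j : 'I_n -> R).
Proof.
split; first by move=> i; rewrite /pure; case: eqP.
by rewrite (bigD1 j) //= big1 /pure ?eqxx ?addr0 // => i /negPf ->.
Qed.

Lemma sum_pure_mull n (j : 'I_n) (F : 'I_n -> R) : \sum_i pure j i * F i = F j.
Proof.
rewrite (bigD1 j) //= big1 /pure ?eqxx ?mul1r ?addr0 // => i /negPf ->.
by rewrite mul0r.
Qed.

Lemma sum_pure_mulr n (j : 'I_n) (F : 'I_n -> R) : \sum_i F i * pure j i = F j.
Proof. by rewrite -(sum_pure_mull j F); apply: eq_bigr => i _; rewrite mulrC. Qed.

Lemma sum_norm_le n (u : 'I_n -> R) e : 0 < e ->
  (forall i, `|u i| < e / (n%:R + 1)) -> \sum_i `|u i| <= e.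
Proof.
move=> e0 small; have n1 : 0 < n%:R + 1 :> R by rewrite ltr_wpDl.
apply: le_trans (_ : \sum_(i < n) e / (n%:R + 1) <= _).
  by apply: ler_sum => i _; exact/ltW.
rewrite sumr_const card_ord -[_ *+ n]mulr_natr mulrAC ler_pdivrMr // ler_pM2l //.
by rewrite lerDl.
Qed.

End Simplex.

Section Payoff.
Context {R : realType} {n m : nat} (A : 'M[R]_(n, m)).

Lemma payoffE z w : payoff A z w = \sum_i z i * \sum_j A i j * w j.
Proof.
by apply: eq_bigr => i _; rewrite mulr_sumr; apply: eq_bigr => j _; rewrite mulrA.
Qed.

Lemma payoff_purel i w : payoff A (pure i) w = \sum_j A i j * w j.
Proof. by rewrite payoffE sum_pure_mull. Qed.

Lemma payoff_purer z j : payoff A z (pure j) = \sum_i z i * A i j.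
Proof. by rewrite payoffE; apply: eq_bigr => i _; rewrite sum_pure_mulr. Qed.

Lemma payoff_pure i j : payoff A (pure i) (pure j) = A i j.
Proof. by rewrite payoff_purel sum_pure_mulr. Qed.

Lemma payoff_suml z w : payoff A z w = \sum_i z i * payoff A (pure i) w.
Proof. by rewrite payoffE; apply: eq_bigr => i _; rewrite payoff_purel. Qed.

Lemma payoff_sumr z w : payoff A z w = \sum_j payoff A z (pure j) * w j.
Proof.
rewrite {1}/payoff exchange_big; apply: eq_bigr => j _.
by rewrite payoff_purer mulr_suml.
Qed.

Lemma payoff_mixr z w1 w2 a :
  payoff A z (fun j => (1 - a) * w1 j + a * w2 j) =
  (1 - a) * payoff A z w1 + a * payoff A z w2.
Proof.
rewrite !(payoff_sumr z) !mulr_sumr -big_split /=; apply: eq_bigr => j _.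
ring.
Qed.

End Payoff.

Section BoundedGame.
Context {R : realType} {n m : nat} (A : 'M[R]_(n, m)).
Hypothesis A01 : forall i j, 0 <= A i j <= 1.
Hypothesis n_gt0 : (0 < n)%N.
Hypothesis m_gt0 : (0 < m)%N.

Local Notation v := (game_value A).
Local Notation f := (fval A).

Lemma payoff_ge0 z w : simplex z -> simplex w -> 0 <= payoff A z w.
Proof.
move=> [z0 _] [w0 _]; apply: sumr_ge0 => i _; apply: sumr_ge0 => j _.
by have /andP[a0 _] := A01 i j; rewrite !mulr_ge0.
Qed.

Lemma payoff_le1 z w : simplex z -> simplex w -> payoff A z w <= 1.
Proof.
move=> [z0 z1] [w0 w1]; rewrite payoff_suml -z1; apply: ler_sum => i _.
rewrite ler_piMr // payoff_purel -w1; apply: ler_sum => j _.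
by have /andP[_ a1] := A01 i j; rewrite ler_piMl.
Qed.

Lemma exists_best_response z :
  exists e : 'I_m, forall k, payoff A z (pure k) <= payoff A z (pure e).
Proof.
have [e _ best] := @arg_maxP _ _ _ (Ordinal m_gt0) xpredT
  (fun j => payoff A z (pure j)) isT.
by exists e => k; exact: best.
Qed.

Lemma payoff_le_best_response z w e : simplex w ->
  (forall k, payoff A z (pure k) <= payoff A z (pure e)) ->
  payoff A z w <= payoff A z (pure e).
Proof.
move=> [w0 w1] best; rewrite payoff_sumr -[leRHS]mulr1 -w1 mulr_sumr.
by apply: ler_sum => j _; exact: ler_wpM2r.
Qed.

Lemma fval_best_response z e :
  (forall k, payoff A z (pure k) <= payoff A z (pure e)) -> f z = payoff A z (pure e).
Proof.
move=> best; set S := [set payoff A z w | w in @simplex R m].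
have e_in : S (payoff A z (pure e)) by exists (pure e) => //; exact: pure_simplex.
have ub : ubound S (payoff A z (pure e)).
  by move=> _ [w sw <-]; exact: payoff_le_best_response.
apply/le_anti/andP; split; first by apply: ge_sup => //; exists (payoff A z (pure e)).
by apply: ub_le_sup => //; exists (payoff A z (pure e)).
Qed.

Lemma payoff_le_fval z w : simplex w -> payoff A z w <= f z.
Proof.
move=> sw; have [e best] := exists_best_response z.
by rewrite (fval_best_response best); exact: payoff_le_best_response.
Qed.

Lemma fval_ge0 z : simplex z -> 0 <= f z.
Proof.
have [e best] := exists_best_response z.
by rewrite (fval_best_response best) => sz; exact/payoff_ge0/pure_simplex.
Qed.

Lemma fval_le1 z : simplex z -> f z <= 1.
Proof.
have [e best] := exists_best_response z.
by rewrite (fval_best_response best) => sz; exact/payoff_le1/pure_simplex.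
Qed.

Lemma has_lbound_fval : has_lbound [set f z | z in @simplex R n].
Proof. by exists 0 => _ [z sz <-]; exact: fval_ge0. Qed.

Lemma value_le_fval z : simplex z -> v <= f z.
Proof. by move=> sz; apply: ge_inf; [exact: has_lbound_fval | exists z]. Qed.

Lemma has_inf_fval : has_inf [set f z | z in @simplex R n].
Proof.
split; last exact: has_lbound_fval.
by exists (f (pure (Ordinal n_gt0))), (pure (Ordinal n_gt0)) => //; exact: pure_simplex.
Qed.

Lemma value_ge0 : 0 <= v.
Proof. by apply: lb_le_inf; [exact: has_inf_fval.1 | move=> _ [z sz <-]; exact: fval_ge0]. Qed.

Lemma payoff_le_value p w : row_minimax A p -> simplex w -> payoff A p w <= v.
Proof. by case=> sp <-; exact: payoff_le_fval. Qed.

Lemma value_le_payoff w z : col_minimax A w -> simplex z -> v <= payoff A z w.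
Proof.
case=> sw <- sz; apply: ge_inf; last by exists z.
by exists 0 => _ [z' sz' <-]; exact: payoff_ge0.
Qed.

Lemma exists_near_minimizer e : 0 < e -> exists2 z, simplex z & f z < v + e.
Proof. by move=> e0; have [_ [z sz <-]] := inf_adherent e0 has_inf_fval; exists z. Qed.

Lemma fval_le_add_dist z z' : simplex z' ->
  f z <= f z' + \sum_i `|z i - z' i|.
Proof.
move=> sz'; have [e best] := exists_best_response z.
have := payoff_le_fval z' (pure_simplex e).
rewrite (fval_best_response best) !payoff_purer => le_e.
apply: le_trans (lerD le_e (lexx _)); rewrite -big_split /=; apply: ler_sum => i _.
have /andP[a0 a1] := A01 i e.
rewrite -lerBlDl -mulrBl (le_trans (ler_norm _)) // normrM [`|A i e|]ger0_norm //.
exact: ler_piMr.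
Qed.

End BoundedGame.

Section ClusterPoint.
Context {R : realType} {n : nat}.

Definition cluster_point (z : nat -> 'I_n -> R) (p : 'I_n -> R) :=
  forall d, 0 < d -> forall N, exists2 N', (N <= N')%N & forall i, `|z N' i - p i| < d.

Lemma simplex_cluster (z : nat -> 'I_n -> R) :
  (forall N, simplex (z N)) -> exists2 p, simplex p & cluster_point z p.
Proof.
move=> sz; pose w N : 'rV[R]_n := \row_i z N i.
have cube_compact := @rV_compact R n (fun=> `[0, 1]%classic) (fun=> @segment_compact R 0 1).
have w_in_cube : (w @ \oo) [set u : 'rV[R]_n | forall i, `[0, 1]%classic (u ord0 i)].
  exists 0%N => // N _ i /=; rewrite mxE in_itv /=.
  by have [z0 _] := sz N; rewrite z0 simplex_le1.
have [a [a_cube a_cluster]] := cube_compact _ _ w_in_cube.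
have cl : cluster_point z (fun i => a ord0 i).
  move=> d d0 N.
  have late : (w @ \oo) [set u | exists2 N', (N <= N')%N & u = w N'].
    by exists N => // N' /= NN'; exists N'.
  have [_ [[N' NN' ->] [_ /(_ ord0) near_a]]] := a_cluster _ _ late (nbhsx_ballx a d d0).
  by exists N' => // i; have := near_a i; rewrite mxE /ball /= distrC.
exists (fun i => a ord0 i) => //; split.
  by move=> i; have /andP[] := a_cube i.
apply/eqP; rewrite -subr_eq0 -normr_le0; apply/ler_addgt0Pr => e e0.
have [N' _ near_a] := cl _ (divr_gt0 e0 (ltr_wpDl (ler0n R n) ltr01)) 0%N.
have [_ <-] := sz N'; rewrite add0r -sumrB (le_trans (ler_norm_sum _ _ _)) //.
by apply: sum_norm_le => // i; rewrite distrC.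
Qed.

End ClusterPoint.

Section MinimaxExistence.
Context {R : realType} {n m : nat} (A : 'M[R]_(n, m)).
Hypothesis A01 : forall i j, 0 <= A i j <= 1.
Hypothesis m_gt0 : (0 < m)%N.

Lemma minimax_of_cluster (z : nat -> 'I_n -> R) p :
  (forall N, simplex (z N)) -> simplex p -> cluster_point z p ->
  (forall N, fval A (z N) <= game_value A + N.+1%:R^-1) -> row_minimax A p.
Proof.
move=> sz sp cl near_value; split => //; apply/eqP.
rewrite eq_le (value_le_fval A01 m_gt0 sp) andbT; apply/ler_addgt0Pr => e e0.
have e2 : 0 < e / 2 by rewrite divr_gt0.
have [N0 _ small] := near_infty_natSinv_lt (PosNum e2).
have [N' NN' near_p] := cl _ (divr_gt0 e2 (ltr_wpDl (ler0n R n) ltr01)) N0.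
have dist : \sum_i `|p i - z N' i| <= e / 2.
  by apply: sum_norm_le => // i; rewrite distrC.
apply: le_trans (fval_le_add_dist A01 m_gt0 p (sz N')) _.
rewrite (splitr e) addrA; apply: lerD dist.
by apply: le_trans (near_value N') _; rewrite lerD2l; exact/ltW/small.
Qed.

Hypothesis n_gt0 : (0 < n)%N.

Lemma exists_row_minimax : exists p, row_minimax A p.
Proof.
have /choice[z zP] : forall N, exists z, simplex z /\ fval A z < game_value A + N.+1%:R^-1.
  move=> N; have [|z sz lt] := exists_near_minimizer A01 n_gt0 m_gt0 (e := N.+1%:R^-1).
    by rewrite invr_gt0.
  by exists z.
have [p sp cl] := simplex_cluster (fun N => (zP N).1).
by exists p; apply: (minimax_of_cluster _ sp cl) => N; [exact: (zP N).1 | exact/ltW/(zP N).2].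
Qed.

End MinimaxExistence.

Section RealInequalities.
Context {R : realType}.

Lemma ln_le_subr1 (z : R) : 0 < z -> ln z <= z - 1.
Proof. by move=> z0; have := @le_ln1Dx R (z - 1); rewrite addrCA subrr addr0; apply; lra. Qed.

Lemma expRN_le (u : R) : 0 <= u -> expR (- u) <= 1 - u + u ^+ 2.
Proof.
move=> u0; have half : (1 + u / 2) ^+ 2 <= expR u.
  rewrite [in expR u](splitr u) expRD -expr2 lerXn2r ?nnegrE ?expR_ge1Dx //; lra.
have pos : 0 < 1 - u + u ^+ 2 by nra.
rewrite expRN -(ler_pM2r (expR_gt0 u)) mulVf ?gt_eqF ?expR_gt0 //.
by apply: le_trans (ler_wpM2l (ltW pos) half); nra.
Qed.

Lemma sum_expN_le n (z b : 'I_n -> R) s : simplex z -> (forall i, 0 <= b i <= 1) -> 0 <= s ->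
  \sum_i z i * expR (- (s * b i)) <= 1 - s * \sum_i z i * b i + s ^+ 2.
Proof.
move=> [z0 z1] b01 s0.
have -> : 1 - s * \sum_i z i * b i + s ^+ 2 = \sum_i z i * (1 - s * b i + s ^+ 2).
  transitivity (\sum_i z i - s * \sum_i z i * b i + s ^+ 2 * \sum_i z i).
    by rewrite z1 mulr1.
  by rewrite !mulr_sumr -sumrB -big_split /=; apply: eq_bigr => i _; ring.
apply: ler_sum => i _; apply: ler_wpM2l => //.
have /andP[b0 b1] := b01 i.
apply: le_trans (expRN_le (mulr_ge0 s0 b0)) _.
rewrite lerD2l exprMn ler_piMr ?sqr_ge0 // expr_le1 //.
Qed.

Lemma nonincreasing_le_from (u : nat -> R) t1 :
  (forall t, (1 <= t)%N -> u t.+1 <= u t) -> (1 <= t1)%N ->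
  forall t, (t1 <= t)%N -> u t <= u t1.
Proof.
move=> noninc t1_ge1; elim=> [|t IH]; first
  by rewrite leqn0 => /eqP t10; rewrite t10 in t1_ge1.
rewrite leq_eqVlt => /predU1P[<- // | lt_t1].
by apply: le_trans (IH lt_t1); apply: noninc; exact: leq_trans t1_ge1 lt_t1.
Qed.

Lemma no_infinite_descent (phi mu : nat -> R) c K : 0 < c -> (forall k, 0 <= phi k) ->
  (forall t, (1 <= t)%N -> mu t.+1 <= mu t) ->
  (fun T : nat => \sum_(1 <= t < T.+1) mu t) @ \oo --> +oo ->
  ~ (forall k, (K <= k)%N -> phi k.+1 <= phi k - c * mu k.*2.+2).
Proof.
move=> c0 phi0 mu_noninc mu_div descent.
pose S T := \sum_(1 <= t < T.+1) mu t.
have S2 T : S T.+2 = S T + mu T.+1 + mu T.+2.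
  by rewrite /S [in LHS]big_nat_recr // [in LHS]big_nat_recr // addrA.
(* [mu] is nonincreasing, so [mu k.*2.+2] outweighs the mean of [mu k.*2.+2] and [mu k.*2.+3] *)
have bound N : phi (K + N)%N + c / 2 * (S (K + N).*2.+1 - S K.*2.+1) <= phi K.
  elim: N => [|N IH]; first by rewrite addn0 subrr mulr0 addr0.
  rewrite addnS doubleS S2.
  have := descent (K + N)%N (leq_addr _ _).
  have := ler_wpM2l (ltW c0) (mu_noninc (K + N).*2.+2 isT).
  lra.
have [N0 _ large] := (cvgryPge _).1 mu_div (S K.*2.+1 + 2 * phi K / c + 1).
have N0_le : (N0 <= (K + N0).*2.+1)%N by rewrite -addnn; lia.
have := large _ N0_le.
have := bound N0; have := phi0 (K + N0)%N.
have : c / 2 * (2 * phi K / c) = phi K by field; rewrite gt_eqF.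
rewrite -/(S _); move=> *; nra.
Qed.

End RealInequalities.

Section RelativeEntropy.
Context {R : realType}.

Definition kl_term (p q : R) := p * ln (p / q) - p + q.

Lemma sqr_sub_sqrt_le_kl_term (p q : R) : 0 <= p -> 0 < q ->
  (Num.sqrt p - Num.sqrt q) ^+ 2 <= kl_term p q.
Proof.
rewrite le_eqVlt => /predU1P[<- q0|p0 q0].
  by rewrite /kl_term sqrtr0 sub0r sqrrN sqr_sqrtr ?mul0r ?subr0 ?add0r // ltW.
set a := Num.sqrt p; set b := Num.sqrt q.
have a0 : 0 < a by rewrite sqrtr_gt0.
have b0 : 0 < b by rewrite sqrtr_gt0.
have pa : p = a ^+ 2 by rewrite sqr_sqrtr // ltW.
have qb : q = b ^+ 2 by rewrite sqr_sqrtr // ltW.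
(* [p ln (p / q) = - 2 a^2 ln (b / a) >= 2 a^2 (1 - b / a)], by [ln z <= z - 1] *)
have ln_pq : ln (p / q) = - (ln (b / a) *+ 2).
  rewrite -lnXn ?divr_gt0 // -lnV ?posrE ?exprn_gt0 ?divr_gt0 //; congr ln.
  by rewrite pa qb; field; rewrite !gt_eqF.
have := ln_le_subr1 (divr_gt0 b0 a0).
rewrite -(ler_pM2l (exprn_gt0 2 a0)) => ln_ba.
have : a ^+ 2 * (b / a - 1) = a * b - a ^+ 2 by field; rewrite gt_eqF.
rewrite /kl_term ln_pq pa qb mulrN mulr2n; nra.
Qed.

Lemma kl_term_ge0 (p q : R) : 0 <= p -> 0 < q -> 0 <= kl_term p q.
Proof. by move=> p0 q0; apply: le_trans (sqr_sub_sqrt_le_kl_term p0 q0); exact: sqr_ge0. Qed.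

Lemma sqr_sub_le_sqr_sub_sqrt (p q : R) : 0 <= p <= 1 -> 0 <= q <= 1 ->
  (q - p) ^+ 2 <= 4 * (Num.sqrt p - Num.sqrt q) ^+ 2.
Proof.
move=> /andP[p0 p1] /andP[q0 q1].
rewrite -{1}(sqr_sqrtr p0) -{1}(sqr_sqrtr q0).
set a := Num.sqrt p; set b := Num.sqrt q.
have a1 : a <= 1 by rewrite -sqrtr1 ler_sqrt.
have b1 : b <= 1 by rewrite -sqrtr1 ler_sqrt.
have a0 : 0 <= a := sqrtr_ge0 p; have b0 : 0 <= b := sqrtr_ge0 q.
have -> : (b ^+ 2 - a ^+ 2) ^+ 2 = (a + b) ^+ 2 * (a - b) ^+ 2 by ring.
rewrite ler_wpM2r ?sqr_ge0 // (_ : 4 = 2 ^+ 2); last by rewrite expr2; lra.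
by rewrite lerXn2r ?nnegrE; lra.
Qed.

Lemma RE_sum_kl_term n (p q : 'I_n -> R) : simplex p -> simplex q ->
  RE p q = \sum_i kl_term (p i) (q i).
Proof. by move=> [_ p1] [_ q1]; rewrite !big_split /= sumrN p1 q1 subrK. Qed.

Lemma RE_ge0 n (p q : 'I_n -> R) : simplex p -> simplex q -> (forall i, 0 < q i) ->
  0 <= RE p q.
Proof.
move=> sp sq q0; rewrite RE_sum_kl_term //; apply: sumr_ge0 => i _.
by apply: kl_term_ge0 => //; case: sp.
Qed.

Lemma sqr_sub_le_RE n (p q : 'I_n -> R) i : simplex p -> simplex q -> (forall i, 0 < q i) ->
  (q i - p i) ^+ 2 <= 4 * RE p q.
Proof.
move=> sp sq q0; have [p0 _] := sp.
rewrite (le_trans (sqr_sub_le_sqr_sub_sqrt _ _)) ?p0 ?(ltW (q0 i)) ?simplex_le1 //.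
rewrite ler_pM2l // RE_sum_kl_term // (bigD1 i) //= ler_wpDr ?sqr_sub_sqrt_le_kl_term //.
by apply: sumr_ge0 => j _; exact: kl_term_ge0.
Qed.

Lemma mul_ln_div_le (p q : R) : 0 <= p -> 0 < q -> p <= 2 * q ->
  p * ln (p / q) <= 2 * `|q - p|.
Proof.
rewrite le_eqVlt => /predU1P[<-|p0] q0 p2q; first by rewrite mul0r mulr_ge0.
have pq0 : 0 < p / q by rewrite divr_gt0.
apply: le_trans (ler_wpM2l (ltW p0) (ln_le_subr1 pq0)) _.
have -> : p * (p / q - 1) = p / q * (p - q) by field; rewrite gt_eqF.
have pq2 : p / q <= 2 by rewrite ler_pdivrMr.
have le_norm : p - q <= `|q - p| by rewrite distrC ler_norm.
by apply: le_trans (ler_wpM2l (ltW pq0) le_norm) _; exact: ler_wpM2r.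
Qed.

Lemma RE_le_sum_dist n (p q : 'I_n -> R) :
  (forall i, 0 <= p i) -> (forall i, 0 < q i) -> (forall i, p i <= 2 * q i) ->
  RE p q <= 2 * \sum_i `|q i - p i|.
Proof.
by move=> p0 q0 p2q; rewrite mulr_sumr; apply: ler_sum => i _; exact: mul_ln_div_le.
Qed.

Lemma RE_small_near n (p : 'I_n -> R) e : simplex p -> 0 < e ->
  exists2 d, 0 < d & forall q, (forall i, 0 < q i) ->
    (forall i, `|q i - p i| < d) -> RE p q <= e.
Proof.
move=> [p0 _] e0; pose pmin := \big[Order.min/1]_(i | 0 < p i) p i.
have pmin0 : 0 < pmin by apply: lt_bigmin.
have e2 : 0 < e / 2 by rewrite divr_gt0.
exists (Num.min (pmin / 2) (e / 2 / (n%:R + 1))).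
  by rewrite lt_min !divr_gt0 // ltr_wpDl.
move=> q q0 near_p; rewrite (_ : e = 2 * (e / 2)); last by field.
apply: le_trans (RE_le_sum_dist p0 q0 _) _.
  move=> i; have [pi0|] := ltP 0 (p i); last first.
    by move=> pi_le0; rewrite (le_trans pi_le0) // mulr_ge0 // ltW.
  have := near_p i; rewrite lt_min => /andP[lt_pmin _].
  have : pmin <= p i by exact: bigmin_le_cond.
  have := ler_norm (p i - q i); rewrite distrC; lra.
rewrite ler_pM2l //; apply: sum_norm_le => // i.
by have := near_p i; rewrite lt_min => /andP[].
Qed.

Lemma cvg_of_RE_cvg0 n (p : 'I_n -> R) (q : nat -> 'I_n -> R) : simplex p ->
  (\forall t \near \oo, simplex (q t) /\ forall i, 0 < q t i) ->
  RE p (q t) @[t --> \oo] --> 0 -> forall i, q t i @[t --> \oo] --> p i.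
Proof.
move=> sp q_pos /cvgrPdist_le RE0 i; apply/cvgrPdist_le => e e0.
have e4 : 0 < e ^+ 2 / 4 by rewrite divr_gt0 ?exprn_gt0.
move: (RE0 _ e4) q_pos; apply: filterS2 => t; rewrite sub0r normrN => RE_small [sq q0].
have := sqr_sub_le_RE i sp sq q0.
rewrite -real_normK ?num_real // distrC => sqr_le.
rewrite -(ler_pXn2r (isT : (0 < 2)%N)) ?nnegrE ?(ltW e0) //.
have := ler_norm (RE p (q t)); lra.
Qed.

End RelativeEntropy.

Section Dynamics.
Variables (R : realType) (n m : nat) (A : 'M[R]_(n, m)).
Variables (mu : nat -> R) (ystar : 'I_m -> R) (x : nat -> 'I_n -> R) (y : nat -> 'I_m -> R).
Hypothesis A01 : forall i j, 0 <= A i j <= 1.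
Hypothesis mu_ge0 : forall t, (1 <= t)%N -> 0 <= mu t.
Hypothesis mwu : is_MWU A mu x y.

Local Notation v := (game_value A).
Local Notation f := (fval A).

Let n_gt0 : (0 < n)%N := simplex_dim_gt0 mwu.1.

Definition mwu_normalizer t := \sum_i x t i * expR (- mu t * payoff A (pure i) (y t)).
Local Notation Z := mwu_normalizer.

Lemma mwu_update t i : (1 <= t)%N ->
  x t.+1 i = x t i * expR (- mu t * payoff A (pure i) (y t)) / Z t.
Proof. by case: mwu => _ [_ upd] /upd ->. Qed.

Lemma mwu_simplex_pos t : (1 <= t)%N -> simplex (x t) /\ forall i, 0 < x t i.
Proof.
case: mwu => sx1 [px1 _]; elim: t => [//|t IH] _.
have [->|t_gt0] := posnP t; first by split.
have [[x0 x1] px] := IH t_gt0.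
have Z0 : 0 < Z t by apply: psumr_gt0 => // i; rewrite mulr_gt0 ?expR_gt0.
have px' i : 0 < x t.+1 i by rewrite mwu_update // divr_gt0 // mulr_gt0 ?expR_gt0.
split => //; split => [i|]; first exact/ltW.
under eq_bigr => i _ do rewrite mwu_update //.
by rewrite -mulr_suml mulfV ?gt_eqF.
Qed.

Lemma mwu_simplex t : (1 <= t)%N -> simplex (x t).
Proof. by move=> /mwu_simplex_pos[]. Qed.

Lemma mwu_pos t i : (1 <= t)%N -> 0 < x t i.
Proof. by move=> /mwu_simplex_pos[_]. Qed.

Lemma normalizer_gt0 t : (1 <= t)%N -> 0 < Z t.
Proof. by move=> t1; apply: psumr_gt0 => // i; rewrite mulr_gt0 ?expR_gt0 ?mwu_pos. Qed.

Lemma normalizer_mul_next t i : (1 <= t)%N ->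
  Z t * x t.+1 i = x t i * expR (- mu t * payoff A (pure i) (y t)).
Proof. by move=> t1; rewrite mwu_update // mulrC divfK // gt_eqF ?normalizer_gt0. Qed.

Lemma RE_mwu_step p t : (1 <= t)%N -> simplex p ->
  RE p (x t.+1) = RE p (x t) + mu t * payoff A p (y t) + ln (Z t).
Proof.
move=> t1 [p0 p1]; rewrite payoff_suml mulr_sumr -[ln (Z t)]mul1r -p1 mulr_suml.
rewrite /RE -!big_split /=; apply: eq_bigr => i _.
have [->|pi0] := eqVneq (p i) 0; first by rewrite !mul0r mulr0 !addr0.
have xi0 := mwu_pos i t1; have Z0 := normalizer_gt0 t1.
have pi_pos : 0 < p i by rewrite lt0r pi0 p0.
have -> : p i / x t.+1 i = p i / x t i * (Z t * expR (mu t * payoff A (pure i) (y t))).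
  rewrite mwu_update // mulNr expRN; field.
  by rewrite !gt_eqF ?expR_gt0.
rewrite [ln (_ * (_ * _))]lnM ?posrE ?divr_gt0 ?mulr_gt0 ?expR_gt0 //.
by rewrite [ln (Z t * _)]lnM ?posrE ?expR_gt0 // expRK; ring.
Qed.

Hypothesis lrca : is_LRCA A ystar x y.
Hypothesis ystar_minimax : col_minimax A ystar.

Let m_gt0 : (0 < m)%N := simplex_dim_gt0 ystar_minimax.1.

Definition lrca_scale : R := Num.max (n%:R / 4) 2.

Lemma lrca_scale_ge2 : 2 <= lrca_scale.
Proof. by rewrite le_max lexx orbT. Qed.

Lemma lrca_scale_gt0 : 0 < lrca_scale.
Proof. exact: lt_le_trans (ltr0Sn R 1) lrca_scale_ge2. Qed.

(* the weight that LRCA puts on the best response at the even round [t + 1] *)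
Definition lrca_weight t := (f (x t) - v) / lrca_scale.

Lemma lrca_odd t : (1 <= t)%N -> odd t -> y t = ystar.
Proof. by move=> t1; have [+ _] := lrca t1; apply. Qed.

Lemma lrca_even t : (1 <= t)%N -> odd t -> exists e,
  f (x t) = \sum_i x t i * A i e /\
  y t.+1 = fun j => (1 - lrca_weight t) * ystar j + lrca_weight t * pure e j.
Proof.
move=> t1 todd; have [_ /(_ _)[|e [best ->]]] := lrca (ltn0Sn t); first by rewrite /= todd.
by exists e; split => //; rewrite -payoff_purer; exact: fval_best_response.
Qed.

Lemma lrca_weight_bounds t : (1 <= t)%N -> 0 <= lrca_weight t <= 1.
Proof.
move=> t1; have sxt := mwu_simplex t1.
have vf := value_le_fval A01 m_gt0 sxt; have f1 := fval_le1 A01 m_gt0 sxt.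
have v0 := value_ge0 A01 n_gt0 m_gt0; have D2 := lrca_scale_ge2.
rewrite divr_ge0 ?subr_ge0 ?(ltW lrca_scale_gt0) //=.
by rewrite ler_pdivrMr ?lrca_scale_gt0 //; lra.
Qed.

Lemma expR_ystar_le t i : (1 <= t)%N ->
  expR (- mu t * payoff A (pure i) ystar) <= expR (- mu t * v).
Proof.
move=> t1; rewrite ler_expR !mulNr lerN2; apply: ler_wpM2l; first exact: mu_ge0.
exact: (value_le_payoff A01 ystar_minimax (pure_simplex i)).
Qed.

Lemma normalizer_ystar_le t : (1 <= t)%N -> y t = ystar -> Z t <= expR (- mu t * v).
Proof.
move=> t1 yt; have [_ x1] := mwu_simplex t1.
rewrite /mwu_normalizer yt -[leRHS]mul1r -x1 mulr_suml; apply: ler_sum => i _.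
by rewrite ler_wpM2l ?(ltW (mwu_pos i t1)) ?expR_ystar_le.
Qed.

Lemma RE_odd_step p t : (1 <= t)%N -> odd t -> row_minimax A p ->
  RE p (x t.+1) <= RE p (x t).
Proof.
move=> t1 todd pmm; rewrite RE_mwu_step //; last by case: pmm.
have ln_Z : ln (Z t) <= - mu t * v.
  rewrite -[leRHS]expRK ler_ln ?posrE ?expR_gt0 ?normalizer_gt0 //.
  exact: normalizer_ystar_le (lrca_odd t1 todd).
have := ler_wpM2l (mu_ge0 t1) (payoff_le_value m_gt0 pmm ystar_minimax.1).
rewrite (lrca_odd t1 todd) mulNr in ln_Z *; lra.
Qed.

Lemma normalizer_pair_le t e : (1 <= t)%N -> odd t ->
  y t.+1 = (fun j => (1 - lrca_weight t) * ystar j + lrca_weight t * pure e j) ->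
  Z t * Z t.+1 <= expR (- mu t * v - mu t.+1 * (1 - lrca_weight t) * v) *
                  \sum_i x t i * expR (- (mu t.+1 * lrca_weight t * A i e)).
Proof.
move=> t1 todd yt1; have /andP[a0 a1] := lrca_weight_bounds t1.
rewrite [Z t.+1]/mwu_normalizer !mulr_sumr; apply: ler_sum => i _.
rewrite mulrA normalizer_mul_next // (lrca_odd t1 todd) yt1 payoff_mixr payoff_pure.
rewrite mulrCA -mulrA ler_wpM2l ?(ltW (mwu_pos i t1)) // -!expRD ler_expR.
have := value_le_payoff A01 ystar_minimax (pure_simplex i).
have := mu_ge0 t1; have : 0 <= mu t.+1 * (1 - lrca_weight t).
  by rewrite mulr_ge0 ?subr_ge0 ?mu_ge0.
move=> *; nra.
Qed.

Lemma ln_normalizer_pair_le t e : (1 <= t)%N -> odd t ->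
  f (x t) = \sum_i x t i * A i e ->
  y t.+1 = (fun j => (1 - lrca_weight t) * ystar j + lrca_weight t * pure e j) ->
  ln (Z t) + ln (Z t.+1) <= - mu t * v - mu t.+1 * (1 - lrca_weight t) * v
    - mu t.+1 * lrca_weight t * f (x t) + (mu t.+1 * lrca_weight t) ^+ 2.
Proof.
move=> t1 todd fe yt1; have /andP[a0 _] := lrca_weight_bounds t1.
have s0 : 0 <= mu t.+1 * lrca_weight t by rewrite mulr_ge0 ?mu_ge0.
have := sum_expN_le (mwu_simplex t1) (fun i => A01 i e) s0; rewrite -fe.
set W := \sum_i _ => W_le.
have W0 : 0 < W by apply: psumr_gt0 => // i; rewrite mulr_gt0 ?expR_gt0 ?mwu_pos.
have := normalizer_pair_le t1 todd yt1; rewrite -/W.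
rewrite -ler_ln ?posrE ?mulr_gt0 ?expR_gt0 ?normalizer_gt0 //.
rewrite !lnM ?posrE ?expR_gt0 ?normalizer_gt0 // expRK => lnZZ.
by apply: le_trans lnZZ _; have := ln_le_subr1 W0; lra.
Qed.

Lemma RE_pair_step p t : (1 <= t)%N -> odd t -> mu t.+1 <= 1 -> row_minimax A p ->
  RE p (x t.+2) <= RE p (x t) - mu t.+1 * lrca_weight t ^+ 2.
Proof.
move=> t1 todd mu1_le1 pmm; have sp := pmm.1; have [e [fe yt1]] := lrca_even t1 todd.
have lnZZ := ln_normalizer_pair_le t1 todd fe yt1.
have /andP[a0 a1] := lrca_weight_bounds t1.
have aD : lrca_weight t * lrca_scale = f (x t) - v.
  by rewrite divfK // gt_eqF ?lrca_scale_gt0.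
have D2 := lrca_scale_ge2.
set a := lrca_weight t in yt1 lnZZ aD a0 a1 *; set D := lrca_scale in aD D2.
have mu0 := mu_ge0 t1; have mu1_0 : 0 <= mu t.+1 := mu_ge0 (ltn0Sn t).
rewrite RE_mwu_step // RE_mwu_step // (lrca_odd t1 todd) yt1 payoff_mixr.
have Pstar := payoff_le_value m_gt0 pmm ystar_minimax.1.
have Pe := payoff_le_value m_gt0 pmm (pure_simplex e).
have Pmix : mu t.+1 * ((1 - a) * payoff A p ystar + a * payoff A p (pure e)) <= mu t.+1 * v.
  by rewrite ler_wpM2l //; nra.
have := ler_wpM2l mu0 Pstar.
(* the decrease is [mu a^2 (D - mu)], and [D >= 2 >= 1 + mu] *)
have : mu t.+1 * a ^+ 2 <= mu t.+1 * a ^+ 2 * (D - mu t.+1).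
  by apply: ler_peMr; [rewrite mulr_ge0 ?sqr_ge0 | lra].
have : mu t.+1 * a * f (x t) - mu t.+1 * a * v = mu t.+1 * a ^+ 2 * D.
  by rewrite -mulrBr -aD; ring.
move=> *; nra.
Qed.

Hypothesis mu_noninc : forall t, (1 <= t)%N -> mu t.+1 <= mu t.
Hypothesis mu_div : (fun T : nat => \sum_(1 <= t < T.+1) mu t) @ \oo --> +oo.
Variable t1 : nat.
Hypothesis mu_le1 : forall t, (t1 <= t)%N -> mu t <= 1.

Lemma RE_nonincreasing_from p k0 : row_minimax A p -> odd k0 -> (t1 <= k0)%N ->
  forall t, (k0 <= t)%N -> RE p (x t) <= RE p (x k0).
Proof.
move=> pmm k0odd t1k0.
have k0_ge1 : (1 <= k0)%N by case: k0 k0odd {t1k0}.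
have even_steps j : RE p (x (k0 + j.*2)%N) <= RE p (x k0).
  elim: j => [|j IH]; first by rewrite addn0.
  rewrite doubleS !addnS; apply: le_trans IH.
  apply: le_trans (RE_pair_step _ _ _ pmm) _.
  - exact: leq_trans k0_ge1 (leq_addr _ _).
  - by rewrite oddD odd_double addbF.
  - by apply: mu_le1; rewrite -addnS (leq_trans t1k0) ?leq_addr.
  by rewrite lerBlDr lerDl mulr_ge0 ?sqr_ge0 ?mu_ge0.
move=> t k0t; rewrite -(subnKC k0t) -[(t - k0)%N]odd_double_half addnCA.
case: (odd (t - k0)%N); last exact: even_steps.
rewrite add1n; apply: le_trans (even_steps _).
apply: RE_odd_step pmm; first exact: leq_trans k0_ge1 (leq_addr _ _).
by rewrite oddD odd_double addbF.
Qed.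

Lemma gap_liminf e K : 0 < e -> exists2 k, (K <= k)%N & f (x k.*2.+1) < v + e.
Proof.
move=> e0; apply: contrapT => no_k.
have [p pmm] := exists_row_minimax A01 m_gt0 n_gt0.
have ce : 0 < (e / lrca_scale) ^+ 2 by rewrite exprn_gt0 ?divr_gt0 ?lrca_scale_gt0.
have RE0 k : 0 <= RE p (x k.*2.+1).
  exact: RE_ge0 pmm.1 (mwu_simplex (ltn0Sn _)) (fun i => mwu_pos i (ltn0Sn _)).
apply: (no_infinite_descent ce RE0 mu_noninc mu_div (K := maxn K t1)).
move=> k /[1!geq_max] /andP[Kk t1k].
have far : v + e <= f (x k.*2.+1).
  by rewrite leNgt; apply/negP => lt; apply: no_k; exists k.
have mu_k : mu k.*2.+2 <= 1 by apply: mu_le1; rewrite -addnn; lia.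
have odd_k : odd k.*2.+1 by rewrite /= odd_double.
apply: le_trans (RE_pair_step (ltn0Sn _) odd_k mu_k pmm) _.
have /andP[a0 _] := lrca_weight_bounds (ltn0Sn k.*2).
rewrite lerD2l lerN2 mulrC; apply: ler_wpM2l; first exact: mu_ge0.
rewrite lerXn2r ?nnegrE //; first by rewrite divr_ge0 ?(ltW e0) ?(ltW lrca_scale_gt0).
by rewrite /lrca_weight ler_pM2r ?invr_gt0 ?lrca_scale_gt0 // lerBrDl.
Qed.

Lemma RE_cvg0_to_some_minimax :
  exists2 xb, row_minimax A xb & RE xb (x t) @[t --> \oo] --> 0.
Proof.
have /choice[k kP] : forall N, exists k, (N <= k)%N /\ f (x k.*2.+1) < v + N.+1%:R^-1.
  move=> N; have [|k Nk lt] := gap_liminf (e := N.+1%:R^-1) N; first by rewrite invr_gt0.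
  by exists k.
pose z N := x (k N).*2.+1.
have sz N : simplex (z N) by exact: mwu_simplex.
have [xb sxb cl] := simplex_cluster sz.
have xb_mm : row_minimax A xb.
  by apply: (minimax_of_cluster A01 m_gt0 sz sxb cl) => N; exact/ltW/(kP N).2.
exists xb => //; apply/cvgrPdist_le => e e0.
have [d d0 RE_near] := RE_small_near sxb e0.
have [N t1N near_xb] := cl d d0 t1.
exists (k N).*2.+1 => // t kt /=.
have t_ge1 : (1 <= t)%N := leq_trans (ltn0Sn _) kt.
rewrite sub0r normrN ger0_norm; last first.
  exact: RE_ge0 sxb (mwu_simplex t_ge1) (fun i => mwu_pos i t_ge1).
have near_k : RE xb (x (k N).*2.+1) <= e.
  exact: RE_near _ (fun i => mwu_pos i (ltn0Sn _)) near_xb.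
apply: le_trans (RE_nonincreasing_from xb_mm _ _ kt) near_k.
- by rewrite /= odd_double.
- by have := (kP N).1; lia.
Qed.

End Dynamics.

Unset Implicit Arguments.
Set Strict Implicit.

Theorem theorem5 (R : realType) (n m : nat) (A : 'M[R]_(n, m))
  (mu : nat -> R) (ystar : 'I_m -> R)
  (x : nat -> 'I_n -> R) (y : nat -> 'I_m -> R) :
  A != 0 ->
  (forall i j, 0 <= A i j <= 1) ->
  (forall t, (1 <= t)%N -> 0 <= mu t) ->
  (forall t, (1 <= t)%N -> mu t.+1 <= mu t) ->
  (fun T : nat => \sum_(1 <= t < T.+1) mu t) @ \oo --> +oo ->
  (exists t', (1 <= t')%N /\ mu t' <= 1) ->
  col_minimax A ystar ->
  is_MWU A mu x y ->
  is_LRCA A ystar x y ->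
  exists xbar, row_minimax A xbar /\
    RE xbar (x t) @[t --> \oo] --> (0 : R) /\
    (forall i, x t i @[t --> \oo] --> xbar i).
Proof.
move=> _ A01 mu_ge0 mu_noninc mu_div [t1 [t1_ge1 mu_t1]] ystar_mm mwu lrca.
have mu_le1 t : (t1 <= t)%N -> mu t <= 1.
  by move=> t1t; apply: le_trans mu_t1; exact: nonincreasing_le_from mu_noninc t1_ge1 _ t1t.
have [xb xb_mm RE0] :=
  RE_cvg0_to_some_minimax A01 mu_ge0 mwu lrca ystar_mm mu_noninc mu_div mu_le1.
have x_pos : \forall t \near \oo, simplex (x t) /\ forall i, 0 < x t i.
  exists 1%N => // t /= t_ge1.
  by split; [exact: mwu_simplex mwu _ t_ge1 | move=> i; exact: mwu_pos mwu _ i t_ge1].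
exists xb; split=> //; split=> //; exact: cvg_of_RE_cvg0 xb_mm.1 x_pos RE0.
Qed.
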